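(* Let $F:\mathbb{R}^d\to\mathbb{R}$ be Lipschitz continuous with constant $L_0$, i.e. $|F(\theta_1)-F(\theta_2)|\le L_0\|\theta_1-\theta_2\|$ for all $\theta_1,\theta_2$. For $\eta>0$ define the Gaussian smoothing $$F_\eta(\theta)=\frac{1}{(2\pi)^{d/2}}\int_{\mathbb{R}^d}F(\theta+\eta v)\,e^{-\frac12\|v\|^2}\,dv=\mathbb{E}_v[F(\theta+\eta v)],$$ where $v\sim\mathcal{N}(0,I_d)$; $F_\eta$ is differentiable with $\nabla F_\eta(\theta)=\mathbb{E}_v\!\left[\frac{F(\theta+\eta v)-F(\theta)}{\eta}\,v\right]$. Then for any $\eta_1,\eta_2>0$ and any $\theta\in\mathbb{R}^d$, $$\|\nabla F_{\eta_2}(\theta)-\nabla F_{\eta_1}(\theta)\|\le\frac{2L_0\,d\,|\eta_2-\eta_1|}{\eta_2}.$$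
   Context: $\|\cdot\|$ denotes the Euclidean norm on $\mathbb{R}^d$, and $v$ is a standard Gaussian random vector in $\mathbb{R}^d$ (mean zero, identity covariance). *)

From HB Require Import structures.
From mathcomp Require Import all_boot all_order all_algebra.
From mathcomp Require Import all_classical all_reals all_analysis.
Set Implicit Arguments. Unset Strict Implicit. Unset Printing Implicit Defensive.
Import Order.TTheory GRing.Theory Num.Theory.
Import numFieldNormedType.Exports.
Local Open Scope ring_scope.

Definition eucl_norm (R : realType) (d : nat) (x : 'rV[R]_d) : R :=
  Num.sqrt (\sum_(i < d) x ord0 i ^+ 2).

(* Expectation E_v[g v] for v ~ N(0, I_n), written as the iterated Lebesgue
   integral against the standard normal density in each coordinate
   (i.e. (2 pi)^{-n/2} \int g(v) exp(-|v|^2/2) dv, by Fubini).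
   Coordinates are accumulated in a function nat -> R: coordinate 0 is
   integrated outermost. *)
Fixpoint gaussE_rec (R : realType) (n : nat) (g : (nat -> R) -> R) : R :=
  match n with
  | 0 => g (fun _ => 0)
  | n'.+1 =>
      \int[@lebesgue_measure R]_x
        (normal_pdf 0 1 x *
         gaussE_rec n' (fun w => g (fun k => if k is k'.+1 then w k' else x)))
  end.

Definition gaussE (R : realType) (d : nat) (g : 'rV[R]_d -> R) : R :=
  gaussE_rec d (fun w => g (\row_(i < d) w (nat_of_ord i))).

Definition smooth_grad (R : realType) (d : nat) (F : 'rV[R]_d -> R)
    (eta : R) (theta : 'rV[R]_d) : 'rV[R]_d :=
  \row_(i < d) gaussE (fun v => (F (theta + eta *: v) - F theta) / eta * v ord0 i).

(* Write h_eta(v) = (F(theta + eta v) - F(theta)) / eta, so that the i-th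
   coordinate of grad F_eta(theta) is E[h_eta(v) v_i], and let
   a = grad F_eta2(theta) - grad F_eta1(theta).  By linearity of the Gaussian
   expectation, |a|^2 = E[(h_eta2 - h_eta1)(v) <a, v>].  Splitting
   h_eta2 - h_eta1 as (F(theta + eta2 v) - F(theta + eta1 v)) / eta2 plus a
   multiple of h_eta1, the Lipschitz bound gives
   |h_eta2(v) - h_eta1(v)| <= c |v| with c = 2 L0 |eta2 - eta1| / eta2, and
   Cauchy-Schwarz gives |<a, v>| <= |a| |v|; hence |a|^2 <= c |a| E|v|^2 = c |a| d.
   Since the expectation is an iterated Lebesgue integral, linearity and
   monotonicity need integrability at every stage: continuous integrands of
   quadratic growth stay continuous with quadratic growth after integrating out
   one coordinate, by dominated convergence and E[x^2] = 1. *)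

From HB Require Import structures.
From mathcomp Require Import all_boot all_order all_algebra.
From mathcomp Require Import all_classical all_reals all_analysis.
From mathcomp Require Import measurable_realfun.
From mathcomp Require Import ring lra.
Set Implicit Arguments. Unset Strict Implicit. Unset Printing Implicit Defensive.
Import Order.TTheory GRing.Theory Num.Theory.
Import numFieldNormedType.Exports.
Local Open Scope classical_set_scope.
Local Open Scope ring_scope.

Section standard_normal.
Context {R : realType}.
Local Notation mu := (@lebesgue_measure R).
Local Notation phi := (@normal_pdf R 0 1).

Lemma std_normal_pdfE x : phi x = normal_peak 1 * expR (- x ^+ 2 / 2).
Proof. by rewrite normal_pdfE ?oner_neq0 // /normal_fun subr0 expr1n. Qed.

Lemma continuous_std_normal_pdf : continuous phi.
Proof. exact: continuous_normal_pdf (oner_neq0 R). Qed.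

Lemma is_derive_std_normal_pdf (x : R) : is_derive x (1 : R) phi (- x * phi x).
Proof.
have -> : phi = fun y => normal_peak 1 * expR (- y ^+ 2 / 2).
  by apply/funext => y; rewrite std_normal_pdfE.
have dinner : is_derive x (1 : R) (fun y : R => - y ^+ 2 / 2) (- x).
  by apply: is_derive_eq; rewrite /GRing.scale /=; field.
have := @is_derive1_comp R expR _ x _ _ (is_derive_expR (- x ^+ 2 / 2)) dinner.
move=> /(is_deriveZ (normal_peak 1)) dexp; apply: is_derive_eq.
by rewrite /GRing.scale /=; ring.
Qed.

Lemma is_derive_mul_std_normal_pdf (x : R) :
  is_derive x (1 : R) (fun y => y * phi y) ((1 - x ^+ 2) * phi x).
Proof.
have := is_deriveM (is_derive_id x (1 : R)) (is_derive_std_normal_pdf x).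
by move=> dmul; apply: is_derive_eq; rewrite /GRing.scale /=; ring.
Qed.

Lemma mul_std_normal_pdf_cvgy : (fun x => x * phi x) @ +oo --> (0 : R).
Proof.
apply: (@squeeze_cvgr _ _ _ _ (fun=> 0) (fun x => normal_peak 1 * (2 * x^-1))).
- near=> x.
  have x0 : 0 < x by near: x; exact: nbhs_pinfty_gt.
  rewrite std_normal_pdfE; apply/andP; split.
    by rewrite mulr_ge0 ?mulr_ge0 ?normal_peak_ge0 ?expR_ge0 // ltW.
  rewrite mulrCA ler_wpM2l ?normal_peak_ge0 // mulNr expRN.
  (* [expR (x^2/2) >= 1 + x^2/2 >= x^2/2] *)
  have := expR_ge1Dx (x ^+ 2 / 2); have := expR_gt0 (x ^+ 2 / 2).
  move=> E0 E1; rewrite ler_pdivrMr // mulrAC ler_pdivlMr //; nra.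
- exact: cvg_cst.
- have -> : (0 : R) = normal_peak 1 * (2 * 0) by rewrite !mulr0.
  apply: cvgMr; apply: cvgMr; apply/gtr0_cvgV0; last exact: cvg_id.
  by near=> x; near: x; exact: nbhs_pinfty_gt.
Unshelve. all: by end_near.
Qed.

Lemma measurable_fun_EFin_continuous (A : set R) (f : R -> R) :
  measurable A -> continuous f -> measurable_fun A (fun x => (f x)%:E).
Proof.
move=> mA cf; apply: measurable_funTS.
by apply/measurable_EFinP; exact: continuous_measurable_fun.
Qed.

Lemma integral_itvcy_split (f : R -> R) (a b : R) : a <= b ->
  (forall x, 0 <= f x) -> continuous f ->
  (\int[mu]_(x in `[a, +oo[) (f x)%:E =
   \int[mu]_(x in `[a, b]) (f x)%:E + \int[mu]_(x in `[b, +oo[) (f x)%:E)%E.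
Proof.
move=> ab f0 cf.
rewrite (@itv_bndbnd_setU _ _ _ (BRight b)) ?bnd_simp //.
rewrite ge0_integral_setU //=.
- by rewrite integral_itv_obnd_cbnd //; exact: measurable_fun_EFin_continuous.
- by apply: measurable_fun_EFin_continuous => //; exact: measurableU.
- by move=> x _; rewrite lee_fin.
- apply/disj_setPS => x [] /=; rewrite !in_itv /= => /andP[_ xb] /andP[bx _].
  by move: xb; rewrite leNgt bx.
Qed.

Lemma continuous_std_normal_pdfM (G : R -> R) :
  continuous G -> continuous (fun x => phi x * G x).
Proof.
by move=> cG x; have := @continuousM R R phi G x (@continuous_std_normal_pdf x) (cG x).
Qed.

Lemma continuous_mul_std_normal_pdf : continuous (fun x : R => x * phi x).
Proof.
move=> x; apply: differentiable_continuous; apply/derivable1_diffP.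
by have := is_derive_mul_std_normal_pdf x.
Qed.

Lemma continuousM_std_normal_pdf (g : R -> R) :
  continuous g -> continuous (fun x => g x * phi x).
Proof.
by move=> cg x; have := @continuousM R R g phi x (cg x) (@continuous_std_normal_pdf x).
Qed.

Lemma continuous_sqr_mul_std_normal_pdf : continuous (fun x : R => x ^+ 2 * phi x).
Proof. exact: continuousM_std_normal_pdf (@exprn_continuous R 2). Qed.

Lemma sqr_mul_std_normal_pdf_ge0 (x : R) : 0 <= x ^+ 2 * phi x.
Proof. by rewrite mulr_ge0 ?sqr_ge0 ?normal_pdf_ge0. Qed.

Lemma integral_sqr_std_normal_pdf_itv01 :
  (\int[mu]_(x in `[0%R, 1%R]) (phi x)%:E =
   \int[mu]_(x in `[0%R, 1%R]) (x ^+ 2 * phi x)%:E + (phi 1)%:E)%E.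
Proof.
have FTC : (\int[mu]_(x in `[0%R, 1%R]) ((1 - x ^+ 2) * phi x)%:E)%E = (phi 1)%:E.
  rewrite (@continuous_FTC2 R _ (fun y => y * phi y) 0 1) ?ltr01 //.
  - by rewrite mul0r mul1r sube0.
  - apply/continuous_subspaceT/continuousM_std_normal_pdf => x.
    by apply: cvgB; [exact: cvg_cst|exact: exprn_continuous].
  - split.
    + by move=> x _; have := is_derive_mul_std_normal_pdf x.
    + apply: cvg_at_right_filter; exact: continuous_mul_std_normal_pdf.
    + apply: cvg_at_left_filter; exact: continuous_mul_std_normal_pdf.
  - move=> x _; have := is_derive_mul_std_normal_pdf x.
    by rewrite derive1E => ?; exact: derive_val.
rewrite -FTC -ge0_integralD //; last 4 first.
- by move=> x _; rewrite lee_fin sqr_mul_std_normal_pdf_ge0.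
- exact: measurable_fun_EFin_continuous continuous_sqr_mul_std_normal_pdf.
- move=> x; rewrite /= in_itv /= => /andP[x0 x1].
  by rewrite lee_fin mulr_ge0 ?normal_pdf_ge0 // subr_ge0; nra.
- apply: measurable_fun_EFin_continuous => //.
  apply: continuousM_std_normal_pdf => x.
  by apply: cvgB; [exact: cvg_cst|exact: exprn_continuous].
by apply: eq_integral => x _; rewrite -EFinD; congr EFin; ring.
Qed.

Lemma integral_sqr_std_normal_pdf_itv1y :
  (\int[mu]_(x in `[1%R, +oo[) (x ^+ 2 * phi x)%:E =
   \int[mu]_(x in `[1%R, +oo[) (phi x)%:E + (phi 1)%:E)%E.
Proof.
have cg : continuous (fun x : R => x ^+ 2 - 1).
  by move=> x; apply: cvgB; [exact: exprn_continuous|exact: cvg_cst].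
have dN (x : R) : is_derive x (1 : R) (fun y => - (y * phi y)) ((x ^+ 2 - 1) * phi x).
  have := is_derive_mul_std_normal_pdf x.
  by move=> d1; apply: is_derive_eq; ring.
have FTC : (\int[mu]_(x in `[1%R, +oo[) ((x ^+ 2 - 1) * phi x)%:E)%E = (phi 1)%:E.
  rewrite (@ge0_continuous_FTC2y R _ (fun y => - (y * phi y)) 1 0).
  - by rewrite sub0e mul1r EFinN oppeK.
  - move=> x x1; rewrite mulr_ge0 ?normal_pdf_ge0 // subr_ge0; nra.
  - exact/continuous_subspaceT/continuousM_std_normal_pdf.
  - rewrite -[X in _ --> X]oppr0; apply: cvgN; exact: mul_std_normal_pdf_cvgy.
  - by move=> x _; have := dN x.
  - exact: (cvg_at_right_filter (cvgN (@continuous_mul_std_normal_pdf 1))).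
  - by move=> x _; have := dN x; rewrite derive1E => ?; exact: derive_val.
rewrite -FTC -ge0_integralD //; last 4 first.
- by move=> x _; rewrite lee_fin normal_pdf_ge0.
- exact: measurable_fun_EFin_continuous continuous_std_normal_pdf.
- move=> x; rewrite /= in_itv /= andbT => x1.
  by rewrite lee_fin mulr_ge0 ?normal_pdf_ge0 // subr_ge0; nra.
- by apply: measurable_fun_EFin_continuous => //; exact: continuousM_std_normal_pdf.
by apply: eq_integral => x _; rewrite -EFinD; congr EFin; ring.
Qed.

Lemma integral_sqr_std_normal_pdf : (\int[mu]_x (x ^+ 2 * phi x)%:E = 1)%E.
Proof.
have even_phi x : phi (- x) = phi x by rewrite !std_normal_pdfE sqrrN.
have half_line : (\int[mu]_(x in `[0%R, +oo[) (x ^+ 2 * phi x)%:E =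
                  \int[mu]_(x in `[0%R, +oo[) (phi x)%:E)%E.
  rewrite (integral_itvcy_split ler01 sqr_mul_std_normal_pdf_ge0
                                continuous_sqr_mul_std_normal_pdf).
  rewrite (integral_itvcy_split ler01 (normal_pdf_ge0 0 1) continuous_std_normal_pdf).
  rewrite integral_sqr_std_normal_pdf_itv1y integral_sqr_std_normal_pdf_itv01.
  by rewrite addeA addeAC.
rewrite ge0_symfun_integralT //; last 3 first.
- exact: sqr_mul_std_normal_pdf_ge0.
- exact: continuous_sqr_mul_std_normal_pdf.
- by move=> x /=; rewrite sqrrN even_phi.
rewrite -set_itvcy half_line set_itvcy -ge0_symfun_integralT.
- exact: integral_normal_pdf.
- exact: normal_pdf_ge0.
- exact: continuous_std_normal_pdf.
- by move=> x /=; rewrite even_phi.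
Qed.

Lemma integrable_sqr_mul_std_normal_pdf :
  mu.-integrable setT (EFin \o (fun x => x ^+ 2 * phi x)).
Proof.
apply/integrableP; split.
  apply/measurable_EFinP; apply: continuous_measurable_fun.
  exact: continuous_sqr_mul_std_normal_pdf.
have -> : (\int[mu]_x `|(EFin \o (fun x : R => (x ^+ 2 * phi x)%R)) x|)%E =
          (\int[mu]_x (x ^+ 2 * phi x)%:E)%E.
  by apply: eq_integral => x _ /=; rewrite ger0_norm ?sqr_mul_std_normal_pdf_ge0.
by rewrite integral_sqr_std_normal_pdf ltry.
Qed.

Lemma integrableZl_EFin (f : R -> R) (a : R) : mu.-integrable setT (EFin \o f) ->
  mu.-integrable setT (EFin \o (fun x => a * f x)).
Proof.
by move=> /(integrableZl measurableT a); apply: eq_integrable.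
Qed.

Lemma integrable_std_normal_pdf_quad (A B : R) :
  mu.-integrable setT (EFin \o (fun x => phi x * (A + B * x ^+ 2))).
Proof.
have := integrableD measurableT (integrableZl_EFin A (integrable_normal_pdf 0 1))
          (integrableZl_EFin B integrable_sqr_mul_std_normal_pdf).
apply: eq_integrable; first exact: measurableT.
by move=> x _ /=; rewrite -EFinD; congr EFin; ring.
Qed.

Lemma Rintegral_std_normal_pdf_quad (A B : R) :
  \int[mu]_x (phi x * (A + B * x ^+ 2)) = A + B.
Proof.
have -> : \int[mu]_x (phi x * (A + B * x ^+ 2)) =
          \int[mu]_x (A * phi x + B * (x ^+ 2 * phi x)).
  by apply: eq_Rintegral => x _; ring.
have iphi := integrable_normal_pdf 0 1; have isqr := integrable_sqr_mul_std_normal_pdf.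
rewrite RintegralD //; [|exact: integrableZl_EFin|exact: integrableZl_EFin].
rewrite !RintegralZl // /Rintegral integral_normal_pdf integral_sqr_std_normal_pdf.
by rewrite !mulr1.
Qed.

Lemma std_normal_pdf_mul_dominated (G : R -> R) (A B : R) :
  (forall x, `|G x| <= A + B * x ^+ 2) ->
  forall x, `|phi x * G x| <= phi x * (A + B * x ^+ 2).
Proof.
by move=> GAB x; rewrite normrM ger0_norm ?normal_pdf_ge0 // ler_wpM2l ?normal_pdf_ge0.
Qed.

Lemma integrable_std_normal_pdf_mul (G : R -> R) (A B : R) : continuous G ->
  (forall x, `|G x| <= A + B * x ^+ 2) ->
  mu.-integrable setT (EFin \o (fun x => phi x * G x)).
Proof.
move=> cG GAB; apply: le_integrable (integrable_std_normal_pdf_quad A B) => //.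
  apply/measurable_EFinP; apply: continuous_measurable_fun.
  exact: continuous_std_normal_pdfM.
move=> x _ /=; rewrite lee_fin (le_trans (std_normal_pdf_mul_dominated GAB x)) //.
exact: ler_norm.
Qed.

Lemma normr_Rintegral_std_normal_pdf_mul_le (G : R -> R) (A B : R) : continuous G ->
  (forall x, `|G x| <= A + B * x ^+ 2) ->
  `|\int[mu]_x (phi x * G x)| <= A + B.
Proof.
move=> cG GAB; have iG := integrable_std_normal_pdf_mul cG GAB.
apply: le_trans (le_normr_Rintegral measurableT iG) _.
rewrite -Rintegral_std_normal_pdf_quad; apply: le_Rintegral => //.
- exact: integrable_norm.
- exact: integrable_std_normal_pdf_quad.
- by move=> x _; exact: std_normal_pdf_mul_dominated.
Qed.

End standard_normal.

Lemma Rintegral_dominated_cvg d (T : measurableType d) (R : realType)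
    (mu : {measure set T -> \bar R}) (f_ : nat -> T -> R) (f g : T -> R) :
  (forall n, measurable_fun setT (f_ n)) ->
  (forall x, f_ ^~ x @ \oo --> f x) ->
  mu.-integrable setT (EFin \o f) -> mu.-integrable setT (EFin \o g) ->
  (forall n x, `|f_ n x| <= g x) ->
  (fun n => \int[mu]_x f_ n x) @ \oo --> \int[mu]_x f x.
Proof.
move=> mf f_f intf intg f_g; rewrite /Rintegral.
apply: (@fine_cvg _ _ _ _ (fun n => (\int[mu]_x (f_ n x)%:E)%E)).
rewrite fineK; last exact: integrable_fin_num.
apply: (@dominated_cvg _ _ _ mu setT measurableT (fun n x => (f_ n x)%:E) _ (EFin \o g)) => //.
- by move=> n; apply/measurable_EFinP; exact: mf.
- by move=> x _; apply/fine_cvgP; split; [exact: nearW|exact: f_f].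
- by move=> n x _ /=; rewrite lee_fin.
Qed.

Section iterated_gauss_expectation.
Context {R : realType}.
Local Notation mu := (@lebesgue_measure R).
Local Notation phi := (@normal_pdf R 0 1).
Implicit Types (g : (nat -> R) -> R) (w : nat -> R) (ws : nat -> nat -> R).

Definition sum_sqr n w := \sum_(k < n) w k ^+ 2.

Definition scons (x : R) w : nat -> R := fun k => if k is k'.+1 then w k' else x.

Definition seq_continuous n g := forall ws w,
  (forall k, (k < n)%N -> ws ^~ k @ \oo --> w k) -> (fun j => g (ws j)) @ \oo --> g w.

Definition quad_bounded n g (A B : R) := forall w, `|g w| <= A + B * sum_sqr n w.

Lemma gaussE_recS n g :
  gaussE_rec n.+1 g = \int[mu]_x (phi x * gaussE_rec n (fun w => g (scons x w))).
Proof. by []. Qed.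

Lemma sum_sqrS n x w : sum_sqr n.+1 (scons x w) = x ^+ 2 + sum_sqr n w.
Proof. by rewrite /sum_sqr big_ord_recl. Qed.

Lemma scons_cvg n (xs : nat -> R) x ws w : xs @ \oo --> x ->
  (forall k, (k < n)%N -> ws ^~ k @ \oo --> w k) ->
  forall k, (k < n.+1)%N -> (fun j => scons (xs j) (ws j)) ^~ k @ \oo --> scons x w k.
Proof. by move=> xsx wsw [|k] //= /wsw. Qed.

Lemma seq_continuous_scons n g x :
  seq_continuous n.+1 g -> seq_continuous n (fun w => g (scons x w)).
Proof. by move=> cg ws w wsw; apply: cg; exact: scons_cvg (cvg_cst x) wsw. Qed.

Lemma quad_bounded_scons n g A B x : quad_bounded n.+1 g A B ->
  quad_bounded n (fun w => g (scons x w)) (A + B * x ^+ 2) B.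
Proof. by move=> gAB w; rewrite -addrA -mulrDr -sum_sqrS. Qed.

Definition gaussE_rec_bounded n := forall g A B,
  seq_continuous n g -> 0 <= B -> quad_bounded n g A B ->
  `|gaussE_rec n g| <= A + B * n%:R.

Definition gaussE_rec_continuous n := forall (gs : nat -> (nat -> R) -> R) g A B,
  (forall j, seq_continuous n (gs j)) -> seq_continuous n g -> 0 <= B ->
  (forall j, quad_bounded n (gs j) A B) -> quad_bounded n g A B ->
  (forall ws w, (forall k, (k < n)%N -> ws ^~ k @ \oo --> w k) ->
     (fun j => gs j (ws j)) @ \oo --> g w) ->
  (fun j => gaussE_rec n (gs j)) @ \oo --> gaussE_rec n g.

Lemma continuous_gaussE_rec_slice n g A B : gaussE_rec_continuous n ->
  seq_continuous n.+1 g -> 0 <= B -> quad_bounded n.+1 g A B ->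
  continuous (fun x => gaussE_rec n (fun w => g (scons x w))).
Proof.
move=> cvgE cg B0 gAB x; apply/(@cvg_nbhsP _ R^o) => xs xsx.
have /pinfty_ex_gt0 [M M0 xsM] := cvg_seq_bounded (cvgP _ xsx).
(* all the slices at the points [xs j] and [x] share one quadratic bound *)
apply: (cvgE _ _ (A + B * (M ^+ 2 + x ^+ 2)) B) => //.
- by move=> j; exact: seq_continuous_scons.
- exact: seq_continuous_scons.
- move=> j w; apply: le_trans (quad_bounded_scons (xs j) gAB w) _.
  rewrite lerD2r lerD2l ler_wpM2l // (@le_trans _ _ (M ^+ 2)) ?lerDl ?sqr_ge0 //.
  by rewrite -real_normK ?num_real // lerXn2r ?nnegrE ?(ltW M0) // xsM.
- move=> w; apply: le_trans (quad_bounded_scons x gAB w) _.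
  by rewrite lerD2r lerD2l ler_wpM2l // lerDr sqr_ge0.
- by move=> ws w wsw; apply: cg; exact: scons_cvg.
Qed.

Lemma gaussE_rec_slice_bound n g A B : gaussE_rec_bounded n ->
  seq_continuous n.+1 g -> 0 <= B -> quad_bounded n.+1 g A B ->
  forall x, `|gaussE_rec n (fun w => g (scons x w))| <= (A + B * n%:R) + B * x ^+ 2.
Proof.
move=> boundE cg B0 gAB x.
by rewrite addrAC; apply: boundE B0 _; [exact: seq_continuous_scons|exact: quad_bounded_scons].
Qed.

(* Proved jointly: the bound at level n.+1 needs continuous slices at level n,
   and the convergence at level n.+1 is dominated convergence using the bound
   at level n. *)
Lemma gaussE_rec_bounded_continuous n :
  gaussE_rec_bounded n /\ gaussE_rec_continuous n.
Proof.
elim: n => [|n [boundE cvgE]].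
  split=> [g A B _ _ gAB|gs g A B _ _ _ _ _ gsg].
    by have := gAB (fun=> 0); rewrite /sum_sqr big_ord0 !mulr0.
  by apply: (gsg (fun _ _ => 0) (fun=> 0)) => k; rewrite ltn0.
split=> [g A B cg B0 gAB|gs g A B cgs cg B0 gsAB gAB gsg].
  rewrite gaussE_recS -natr1 mulrDr mulr1 addrA.
  exact: normr_Rintegral_std_normal_pdf_mul_le
    (continuous_gaussE_rec_slice cvgE cg B0 gAB) (gaussE_rec_slice_bound boundE cg B0 gAB).
have slice_cvg x : (fun j => gaussE_rec n (fun w => gs j (scons x w))) @ \oo -->
                   gaussE_rec n (fun w => g (scons x w)).
  apply: (cvgE _ _ (A + B * x ^+ 2) B) => //.
  - by move=> j; exact: seq_continuous_scons.
  - exact: seq_continuous_scons.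
  - by move=> j; exact: quad_bounded_scons.
  - exact: quad_bounded_scons.
  - by move=> ws w wsw; apply: gsg; exact: scons_cvg (cvg_cst x) wsw.
have -> : (fun j => gaussE_rec n.+1 (gs j)) =
          (fun j => \int[mu]_x (phi x * gaussE_rec n (fun w => gs j (scons x w)))) by [].
rewrite gaussE_recS.
apply: (@Rintegral_dominated_cvg _ _ R mu _ _
         (fun x => phi x * ((A + B * n%:R) + B * x ^+ 2))).
- move=> j; apply: continuous_measurable_fun; apply: continuous_std_normal_pdfM.
  exact: continuous_gaussE_rec_slice cvgE (cgs j) B0 (gsAB j).
- by move=> x; apply: cvgMr; exact: slice_cvg.
- have := integrable_std_normal_pdf_mul (continuous_gaussE_rec_slice cvgE cg B0 gAB)
                                        (gaussE_rec_slice_bound boundE cg B0 gAB).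
  exact.
- exact: integrable_std_normal_pdf_quad.
- move=> j; apply: std_normal_pdf_mul_dominated.
  exact: gaussE_rec_slice_bound boundE (cgs j) B0 (gsAB j).
Qed.

Definition gauss_regular n g :=
  seq_continuous n g /\ exists A B, 0 <= B /\ quad_bounded n g A B.

Lemma normr_gaussE_rec_le n g A B :
  seq_continuous n g -> 0 <= B -> quad_bounded n g A B ->
  `|gaussE_rec n g| <= A + B * n%:R.
Proof. exact: (gaussE_rec_bounded_continuous n).1. Qed.

Lemma gauss_regular_scons n g x :
  gauss_regular n.+1 g -> gauss_regular n (fun w => g (scons x w)).
Proof.
move=> [cg [A [B [B0 gAB]]]]; split; first exact: seq_continuous_scons.
by exists (A + B * x ^+ 2), B; split => //; exact: quad_bounded_scons.
Qed.

Lemma gauss_regular_lin n f g (a b : R) : gauss_regular n f -> gauss_regular n g ->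
  gauss_regular n (fun w => a * f w + b * g w).
Proof.
move=> [cf [A1 [B1 [B10 fAB]]]] [cg [A2 [B2 [B20 gAB]]]]; split.
  by move=> ws w wsw; apply: cvgD; apply: cvgMr; [exact: cf|exact: cg].
exists (`|a| * A1 + `|b| * A2), (`|a| * B1 + `|b| * B2).
split=> [|w]; first by rewrite addr_ge0 // mulr_ge0.
rewrite (le_trans (ler_normD _ _)) // !normrM.
have := lerD (ler_wpM2l (normr_ge0 a) (fAB w)) (ler_wpM2l (normr_ge0 b) (gAB w)).
by move/le_trans; apply; rewrite le_eqVlt; apply/orP; left; apply/eqP; ring.
Qed.

Lemma integrable_gaussE_rec_slice n g : gauss_regular n.+1 g ->
  mu.-integrable setT (EFin \o (fun x => phi x * gaussE_rec n (fun w => g (scons x w)))).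
Proof.
move=> [cg [A [B [B0 gAB]]]]; have [boundE cvgE] := gaussE_rec_bounded_continuous n.
exact: integrable_std_normal_pdf_mul (continuous_gaussE_rec_slice cvgE cg B0 gAB)
                                     (gaussE_rec_slice_bound boundE cg B0 gAB).
Qed.

Lemma gaussE_rec_lin n f g (a b : R) : gauss_regular n f -> gauss_regular n g ->
  gaussE_rec n (fun w => a * f w + b * g w) = a * gaussE_rec n f + b * gaussE_rec n g.
Proof.
elim: n f g => [//|n IH] f g rf rg; rewrite !gaussE_recS.
transitivity (\int[mu]_x (a * (phi x * gaussE_rec n (fun w => f (scons x w))) +
                          b * (phi x * gaussE_rec n (fun w => g (scons x w))))).
  apply: eq_Rintegral => x _.
  by rewrite IH; [ring|exact: gauss_regular_scons|exact: gauss_regular_scons].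
have intf := integrable_gaussE_rec_slice rf; have intg := integrable_gaussE_rec_slice rg.
rewrite RintegralD //; [|exact: integrableZl_EFin|exact: integrableZl_EFin].
by rewrite !RintegralZl.
Qed.

Lemma gaussE_rec0 n : gaussE_rec n (fun=> 0 : R) = 0.
Proof.
elim: n => [//|n IH]; rewrite gaussE_recS.
under eq_Rintegral do rewrite IH mulr0.
by rewrite /Rintegral integral0.
Qed.

Lemma gauss_regular0 n : gauss_regular n (fun=> 0 : R).
Proof.
split; first by move=> ws w _; exact: cvg_cst.
by exists 0, 0; split => // w; rewrite normr0 mul0r addr0.
Qed.

Lemma gauss_regular_sum n (I : Type) (s : seq I) (G : I -> (nat -> R) -> R) :
  (forall i, gauss_regular n (G i)) ->
  gauss_regular n (fun w => \sum_(i <- s) G i w) /\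
  gaussE_rec n (fun w => \sum_(i <- s) G i w) = \sum_(i <- s) gaussE_rec n (G i).
Proof.
move=> rG; elim: s => [|i s [rs Es]].
  under eq_fun do rewrite big_nil.
  by rewrite big_nil gaussE_rec0; split; first exact: gauss_regular0.
have -> : (fun w => \sum_(j <- i :: s) G j w) =
          (fun w => 1 * G i w + 1 * \sum_(j <- s) G j w).
  by apply/funext => w; rewrite big_cons !mul1r.
by rewrite gaussE_rec_lin // big_cons !mul1r Es; split; first exact: gauss_regular_lin.
Qed.

End iterated_gauss_expectation.

Lemma sqr_sum_mul_le (R : realFieldType) (n : nat) (a b : 'I_n -> R) :
  (\sum_i a i * b i) ^+ 2 <= (\sum_i a i ^+ 2) * (\sum_i b i ^+ 2).
Proof.
have lagrange : \sum_i \sum_j (a i * b j - a j * b i) ^+ 2 =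
    (\sum_i a i ^+ 2) * (\sum_j b j ^+ 2) + (\sum_i b i ^+ 2) * (\sum_j a j ^+ 2) -
    2 * ((\sum_i a i * b i) * (\sum_j a j * b j)).
  rewrite !big_distrlr /= mulr_sumr -big_split -sumrB /=; apply: eq_bigr => i _.
  by rewrite mulr_sumr -big_split -sumrB /=; apply: eq_bigr => j _; ring.
have : 0 <= \sum_i \sum_j (a i * b j - a j * b i) ^+ 2.
  by apply: sumr_ge0 => i _; apply: sumr_ge0 => j _; exact: sqr_ge0.
rewrite lagrange expr2; lra.
Qed.

Section euclidean_norm.
Context {R : realType} {n : nat}.
Implicit Types x y : 'rV[R]_n.

Lemma eucl_norm_ge0 x : 0 <= eucl_norm x.
Proof. exact: sqrtr_ge0. Qed.

Lemma sqr_eucl_norm x : eucl_norm x ^+ 2 = \sum_(i < n) x ord0 i ^+ 2.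
Proof. by rewrite sqr_sqrtr // sumr_ge0 // => i _; exact: sqr_ge0. Qed.

Lemma eucl_normZ (c : R) x : eucl_norm (c *: x) = `|c| * eucl_norm x.
Proof.
rewrite /eucl_norm -sqrtr_sqr -sqrtrM ?sqr_ge0 // mulr_sumr.
by congr Num.sqrt; apply: eq_bigr => i _; rewrite mxE exprMn.
Qed.

Lemma normr_coord_le_eucl_norm x i : `|x ord0 i| <= eucl_norm x.
Proof.
rewrite -sqrtr_sqr ler_sqrt ?sumr_ge0 // => [|j _]; last exact: sqr_ge0.
by rewrite (bigD1 i) //= lerDl sumr_ge0 // => j _; exact: sqr_ge0.
Qed.

Lemma normr_dot_le_eucl_norm x y :
  `|\sum_(i < n) x ord0 i * y ord0 i| <= eucl_norm x * eucl_norm y.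
Proof.
rewrite -[leRHS]ger0_norm ?mulr_ge0 ?eucl_norm_ge0 //.
rewrite -ler_sqr ?normr_ge0 // !real_normK ?num_real //.
by rewrite exprMn !sqr_eucl_norm sqr_sum_mul_le.
Qed.

Lemma eucl_norm_cvg0 (u : nat -> 'rV[R]_n) :
  (forall i, (fun j => u j ord0 i) @ \oo --> 0) -> (fun j => eucl_norm (u j)) @ \oo --> 0.
Proof.
move=> u0.
have sum0 : (fun j => \sum_(i < n) u j ord0 i ^+ 2) @ \oo --> \sum_(i < n) (0 : R) ^+ 2.
  apply: cvg_big => //. exact: add_continuous.
  by move=> i _; exact: cvgM (u0 i) (u0 i).
rewrite big1 ?expr0n // in sum0; rewrite -[X in _ --> X]sqrtr0.
exact: (continuous_cvg _ (@sqrt_continuous R 0) sum0).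
Qed.

End euclidean_norm.

Section lipschitz_gaussian_smoothing.
Variables (R : realType) (d : nat) (F : 'rV[R]_d -> R) (L0 : R).
Hypothesis F_lip : forall t1 t2, `|F t1 - F t2| <= L0 * eucl_norm (t1 - t2).
Variable theta : 'rV[R]_d.
Implicit Types (w : nat -> R) (eta : R).

Definition rowv w : 'rV[R]_d := \row_(i < d) w i.

Definition diff_quot eta w := (F (theta + eta *: rowv w) - F theta) / eta.

Lemma sqr_eucl_norm_rowv w : eucl_norm (rowv w) ^+ 2 = sum_sqr d w.
Proof. by rewrite sqr_eucl_norm; apply: eq_bigr => i _; rewrite mxE. Qed.

Lemma lipschitz_const_ge0 : (0 < d)%N -> 0 <= L0.
Proof.
move=> d_gt0; pose e : 'rV[R]_d := const_mx 1.
have e_gt0 : 0 < eucl_norm (0 - e).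
  by apply: lt_le_trans (normr_coord_le_eucl_norm _ (Ordinal d_gt0)); rewrite !mxE normr_gt0.
by rewrite -(pmulr_lge0 _ e_gt0) (le_trans _ (F_lip 0 e)).
Qed.

Lemma F_lip_shift (x y : 'rV[R]_d) :
  `|F (theta + x) - F (theta + y)| <= L0 * eucl_norm (x - y).
Proof. by rewrite (le_trans (F_lip _ _)) // opprD addrACA subrr add0r. Qed.

Lemma normr_diff_quot_le eta w : 0 < eta -> `|diff_quot eta w| <= L0 * eucl_norm (rowv w).
Proof.
move=> eta_gt0; rewrite normrM normfV (gtr0_norm eta_gt0) ler_pdivrMr //.
rewrite (le_trans (F_lip _ _)) // addrC addKr eucl_normZ gtr0_norm //.
by rewrite [eta * _]mulrC mulrA.
Qed.

Lemma normr_diff_quotB_le eta1 eta2 w : 0 < eta1 -> 0 < eta2 ->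
  `|diff_quot eta2 w - diff_quot eta1 w|
    <= 2 * L0 * `|eta2 - eta1| / eta2 * eucl_norm (rowv w).
Proof.
move=> eta1_gt0 eta2_gt0.
have F21 : `|F (theta + eta2 *: rowv w) - F (theta + eta1 *: rowv w)|
             <= L0 * (`|eta2 - eta1| * eucl_norm (rowv w)).
  by rewrite -eucl_normZ scalerBl F_lip_shift.
have F10 : `|F (theta + eta1 *: rowv w) - F theta|
             <= L0 * (eta1 * eucl_norm (rowv w)).
  have := F_lip_shift (eta1 *: rowv w) 0.
  by rewrite addr0 subr0 eucl_normZ (gtr0_norm eta1_gt0).
(* first move from [eta2] to [eta1] inside [F], then change the divisor *)
have -> : diff_quot eta2 w - diff_quot eta1 w =
          (F (theta + eta2 *: rowv w) - F (theta + eta1 *: rowv w)) / eta2 +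
          (F (theta + eta1 *: rowv w) - F theta) * ((eta1 - eta2) / (eta1 * eta2)).
  by rewrite /diff_quot; field; rewrite !gt_eqF.
rewrite (le_trans (ler_normD _ _)) // !normrM !normfV normrM [`|eta1 - eta2|]distrC.
rewrite !(gtr0_norm eta1_gt0) !(gtr0_norm eta2_gt0).
have k_ge0 : 0 <= `|eta2 - eta1| / (eta1 * eta2).
  by rewrite divr_ge0 // ltW // mulr_gt0.
apply: le_trans (lerD (ler_wpM2r _ F21) (ler_wpM2r k_ge0 F10)) _.
  by rewrite invr_ge0 ltW.
by rewrite le_eqVlt; apply/orP; left; apply/eqP; field; rewrite !gt_eqF.
Qed.

Lemma seq_continuous_F_shift eta : seq_continuous d (fun w => F (theta + eta *: rowv w)).
Proof.
move=> ws w wsw; set l := F (theta + eta *: rowv w).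
pose e j := L0 * eucl_norm (eta *: rowv (ws j) - eta *: rowv w).
have e0 : e @ \oo --> 0.
  rewrite -[X in _ --> X](mulr0 L0); apply: cvgMr; apply: eucl_norm_cvg0 => i.
  have -> : (fun j => (eta *: rowv (ws j) - eta *: rowv w) ord0 i) =
            (fun j => eta * (ws j i - w i)) by apply/funext => j; rewrite !mxE mulrBr.
  rewrite -[X in _ --> X](mulr0 eta) -(subrr (w i)); apply: cvgMr.
  by apply: cvgB; [exact: wsw|exact: cvg_cst].
apply: (@squeeze_cvgr _ _ _ _ (fun j => l - e j) (fun j => l + e j)).
- by apply: nearW => j; rewrite -ler_distl F_lip_shift.
- by rewrite -[X in _ --> X]subr0; apply: cvgB; [exact: cvg_cst|exact: e0].
- by rewrite -[X in _ --> X]addr0; apply: cvgD; [exact: cvg_cst|exact: e0].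
Qed.

Definition grad_integrand eta (i : 'I_d) w := diff_quot eta w * rowv w ord0 i.

Lemma smooth_gradB_coord eta1 eta2 i :
  (smooth_grad F eta2 theta - smooth_grad F eta1 theta) ord0 i =
  gaussE_rec d (grad_integrand eta2 i) - gaussE_rec d (grad_integrand eta1 i).
Proof. by rewrite !mxE. Qed.

Lemma gauss_regular_grad_integrand eta i : 0 < eta -> 0 <= L0 ->
  gauss_regular d (grad_integrand eta i).
Proof.
move=> eta_gt0 L0_ge0; split.
  move=> ws w wsw; apply: cvgM.
    by apply: cvgMl; apply: cvgB; [exact: seq_continuous_F_shift|exact: cvg_cst].
  have -> : (fun j => rowv (ws j) ord0 i) = ws ^~ i by apply/funext => j; rewrite mxE.
  by rewrite mxE; exact: wsw.
exists 0, L0; split=> // w; rewrite add0r normrM -sqr_eucl_norm_rowv expr2 mulrA.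
by rewrite ler_pM ?normr_ge0 ?normr_diff_quot_le ?normr_coord_le_eucl_norm.
Qed.

Definition grad_gap_integrand (a : 'rV[R]_d) eta1 eta2 w :=
  (diff_quot eta2 w - diff_quot eta1 w) * \sum_(i < d) a ord0 i * rowv w ord0 i.

Lemma grad_gap_integrandE a eta1 eta2 : grad_gap_integrand a eta1 eta2 =
  (fun w => \sum_(i < d) (a ord0 i * grad_integrand eta2 i w +
                          - a ord0 i * grad_integrand eta1 i w)).
Proof.
apply/funext => w; rewrite /grad_gap_integrand mulr_sumr.
by apply: eq_bigr => i _; rewrite /grad_integrand; ring.
Qed.

Lemma gauss_regular_grad_gap_integrand a eta1 eta2 : 0 < eta1 -> 0 < eta2 -> 0 <= L0 ->
  gauss_regular d (grad_gap_integrand a eta1 eta2).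
Proof.
move=> eta1_gt0 eta2_gt0 L0_ge0; rewrite grad_gap_integrandE.
apply: (gauss_regular_sum _ _).1 => i.
by apply: gauss_regular_lin; exact: gauss_regular_grad_integrand.
Qed.

Lemma gaussE_rec_grad_gap_integrand a eta1 eta2 : 0 < eta1 -> 0 < eta2 -> 0 <= L0 ->
  gaussE_rec d (grad_gap_integrand a eta1 eta2) =
  \sum_(i < d) a ord0 i * (smooth_grad F eta2 theta - smooth_grad F eta1 theta) ord0 i.
Proof.
move=> eta1_gt0 eta2_gt0 L0_ge0.
have reg_lin i := gauss_regular_lin (a ord0 i) (- a ord0 i)
  (gauss_regular_grad_integrand i eta2_gt0 L0_ge0)
  (gauss_regular_grad_integrand i eta1_gt0 L0_ge0).
rewrite grad_gap_integrandE (gauss_regular_sum _ reg_lin).2; apply: eq_bigr => i _.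
rewrite gaussE_rec_lin ?smooth_gradB_coord; first by ring.
all: exact: gauss_regular_grad_integrand.
Qed.

Lemma quad_bounded_grad_gap_integrand a eta1 eta2 : 0 < eta1 -> 0 < eta2 ->
  quad_bounded d (grad_gap_integrand a eta1 eta2) 0
    (2 * L0 * `|eta2 - eta1| / eta2 * eucl_norm a).
Proof.
move=> eta1_gt0 eta2_gt0 w; rewrite add0r normrM -sqr_eucl_norm_rowv.
apply: le_trans (ler_pM (normr_ge0 _) (normr_ge0 _) (normr_diff_quotB_le w eta1_gt0 eta2_gt0)
                        (normr_dot_le_eucl_norm a (rowv w))) _.
by rewrite le_eqVlt; apply/orP; left; apply/eqP; ring.
Qed.

End lipschitz_gaussian_smoothing.

Lemma le_of_sqr_le_mul (R : realDomainType) (x k : R) :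
  0 <= x -> 0 <= k -> x ^+ 2 <= x * k -> x <= k.
Proof. by move=> x_ge0 k_ge0 xk; rewrite leNgt; apply/negP => kx; nra. Qed.

Lemma eucl_norm_dim0 (R : realType) (x : 'rV[R]_0) : eucl_norm x = 0.
Proof. by rewrite /eucl_norm big_ord0 sqrtr0. Qed.

Theorem lemma2 (R : realType) (d : nat) (F : 'rV[R]_d -> R) (L0 : R)
  (HF : forall t1 t2 : 'rV[R]_d, `|F t1 - F t2| <= L0 * eucl_norm (t1 - t2))
  (eta1 eta2 : R) (h1 : 0 < eta1) (h2 : 0 < eta2) (theta : 'rV[R]_d) :
  eucl_norm (smooth_grad F eta2 theta - smooth_grad F eta1 theta)
    <= 2 * L0 * d%:R * `|eta2 - eta1| / eta2.
Proof.
case: d F HF theta => [|d] F HF theta; first by rewrite eucl_norm_dim0 mulr0 !mul0r.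
have L0_ge0 := lipschitz_const_ge0 HF (ltn0Sn d).
set a := smooth_grad F eta2 theta - smooth_grad F eta1 theta.
set c := 2 * L0 * `|eta2 - eta1| / eta2.
have c_ge0 : 0 <= c by rewrite divr_ge0 ?mulr_ge0 // ltW.
have := normr_gaussE_rec_le (gauss_regular_grad_gap_integrand HF theta a h1 h2 L0_ge0).1
  (mulr_ge0 c_ge0 (eucl_norm_ge0 a)) (quad_bounded_grad_gap_integrand HF theta a h1 h2).
rewrite (gaussE_rec_grad_gap_integrand HF) // add0r.
have -> : \sum_(i < d.+1) a ord0 i * a ord0 i = eucl_norm a ^+ 2.
  by rewrite sqr_eucl_norm; apply: eq_bigr => i _; rewrite expr2.
rewrite ger0_norm ?sqr_ge0 // => norm_a_le.
rewrite [c * _]mulrC -mulrA in norm_a_le.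
have -> : 2 * L0 * d.+1%:R * `|eta2 - eta1| / eta2 = c * d.+1%:R by rewrite /c; ring.
by apply: le_of_sqr_le_mul norm_a_le; [exact: eucl_norm_ge0|exact: mulr_ge0].
Qed.
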